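(* Let $G$ be a graph containing a triangle $u_1u_2u_3$ such that $d_G(u_1)=2$, $d_G(u_2)=3$ and $N_G(u_2)=\{u_1,u_3,u_4\}$. Let $D$ be an orientation of $G$ in which the edges incident with $u_1$ or $u_2$ are oriented as the arcs $(u_1,u_3)$, $(u_2,u_1)$, $(u_2,u_3)$, $(u_4,u_2)$, and let $D'=D-\{u_1,u_2\}$. Then $\mathrm{diff}(D)=\mathrm{diff}(D')$. In particular, $D$ is an AT-orientation if and only if $D'$ is an AT-orientation.
   Context: For an orientation $D$ of a graph, an Eulerian sub-digraph of $D$ is a spanning sub-digraph $F$ of $D$ with $d^+_F(v)=d^-_F(v)$ for every vertex $v$; $\mathrm{diff}(D)$ is the number of Eulerian sub-digraphs of $D$ with an even number of arcs minus the number with an odd number of arcs; $D$ is an AT-orientation if $\mathrm{diff}(D)\ne 0$. *)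

From mathcomp Require Import all_boot all_order all_algebra.
Set Implicit Arguments. Unset Strict Implicit. Unset Printing Implicit Defensive.
Import GRing.Theory Num.Theory.
Local Open Scope ring_scope.

Definition simple_graph (V : finType) (e : rel V) : Prop :=
  (forall x, ~~ e x x) /\ (forall x y, e x y = e y x).

Definition nbhd (V : finType) (e : rel V) (v : V) : {set V} := [set w | e v w].
Definition deg (V : finType) (e : rel V) (v : V) : nat := #|nbhd e v|.

Definition orientation (V : finType) (e : rel V) (d : rel V) : Prop :=
  (forall x y, d x y -> e x y) /\ (forall x y, e x y -> d x y (+) d y x).

Definition arcs_on (V : finType) (d : rel V) (S : {set V}) : {set V * V} :=
  [set a | [&& a.1 \in S, a.2 \in S & d a.1 a.2]].

Definition eulerian (V : finType) (F : {set V * V}) : bool :=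
  [forall v, #|[set a in F | a.1 == v]| == #|[set a in F | a.2 == v]|].

(* diff of the digraph d induced on S: (#even Eulerian spanning sub-digraphs)
   - (#odd ones), computed as a signed sum. *)
Definition diff_on (V : finType) (d : rel V) (S : {set V}) : int :=
  \sum_(F : {set V * V} | (F \subset arcs_on d S) && eulerian F) (-1) ^+ #|F|.

Definition AT_on (V : finType) (d : rel V) (S : {set V}) : Prop :=
  diff_on d S != 0.

From mathcomp Require Import all_boot all_order all_algebra zify.
Import GRing.Theory Num.Theory.

Set Implicit Arguments.
Unset Strict Implicit.
Unset Printing Implicit Defensive.

(* At u1 the only out-arc is u1u3 and the only in-arc is u2u1; at u2 the only
   in-arc is u4u2 and the out-arcs are u2u1, u2u3.  Hence an Eulerian F of D
   contains u1u3 iff it contains u2u1, and contains u4u2 iff it contains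
   exactly one of u2u1, u2u3.  If u4u2 is not in F, F uses no arc at u1 or u2,
   so it is an Eulerian sub-digraph of D'.  If u4u2 is in F, F meets the
   triangle {u2u1, u1u3, u2u3} either in the path u2u1u3 or in the arc u2u3;
   these have the same net flow at every vertex, so toggling the triangle is
   an involution on such F that preserves Eulerianity and flips the parity of
   |F|, and their contributions to diff(D) cancel. *)

Local Open Scope ring_scope.

Lemma sum_eq_indicator (I : finType) (R : nzSemiRingType) (A : {set I}) (y : I) :
  \sum_(x in A) (x == y)%:R = (y \in A)%:R :> R.
Proof.
case yA: (y \in A); last first.
  by rewrite big1 // => x xA; case: eqP xA => // ->; rewrite yA.
by rewrite (bigD1 y) //= eqxx big1 ?addr0 // => x /andP[_ /negbTE ->].
Qed.

Lemma natr_card_set_in (I : finType) (R : nzSemiRingType) (A : {set I}) (P : pred I) :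
  #|[set x in A | P x]|%:R = \sum_(x in A) (P x)%:R :> R.
Proof.
rewrite -sum1_card natr_sum big_mkcond [RHS]big_mkcond /=.
by apply: eq_bigr => x _; rewrite inE; case: (x \in A); case: (P x).
Qed.

Lemma set2_card2 (T : finType) (A : {set T}) (x y : T) :
  #|A| = 2%N -> x \in A -> y \in A -> x != y -> A = [set x; y].
Proof.
move=> A2 xA yA xy; apply/esym/eqP.
by rewrite eqEcard subUset !sub1set xA yA cards2 xy A2.
Qed.

Lemma setI_blocks (T : finType) (F P Q : {set T}) (k : bool) :
  {in P, forall x, (x \in F) = k} -> {in Q, forall x, (x \in F) = ~~ k} ->
  F :&: (P :|: Q) = if k then P else Q.
Proof.
case: k => FP FQ; apply/setP => x; rewrite !inE;
  have [xP|xP] := boolP (x \in P); have [xQ|xQ] := boolP (x \in Q);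
  rewrite ?andbF //=; by [rewrite FP | rewrite FQ | move: (FP x xP); rewrite FQ].
Qed.

Lemma sum_sign_reversing_involution (I : finType) (R : numDomainType)
    (P : pred I) (f : I -> I) (g : I -> R) :
  involutive f -> (forall i, P i -> P (f i)) ->
  (forall i, P i -> g (f i) = - g i) ->
  \sum_(i | P i) g i = 0.
Proof.
move=> fK Pf gf.
have P_f i : P (f i) = P i by apply/idP/idP => /Pf; rewrite ?fK.
have SN : \sum_(i | P i) g i = - \sum_(i | P i) g i.
  rewrite [LHS](reindex_inj (inv_inj fK)) /= -sumrN.
  by apply: eq_big => // i; rewrite P_f => /gf.
have : (\sum_(i | P i) g i) *+ 2 == 0 by rewrite mulr2n {1}SN addNr.
by rewrite mulrn_eq0 => /eqP.
Qed.

Section ArcFlow.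

Variable T : finType.
Implicit Types (F G X : {set T * T}) (v : T).

Definition flow F v : int := \sum_(x in F) ((x.1 == v)%:R - (x.2 == v)%:R).

Lemma eulerianP F : reflect (forall v, flow F v = 0) (eulerian F).
Proof.
apply: (iffP forallP) => eF v; have := eF v; rewrite /flow sumrB -!natr_card_set_in.
  by move/eqP->; rewrite subrr.
by move/eqP; rewrite subr_eq0 eqr_nat.
Qed.

Lemma flow_setID F X v : flow F v = flow (F :&: X) v + flow (F :\: X) v.
Proof. exact: big_setID. Qed.

Lemma eulerian_exchange F G X :
  F :\: X = G :\: X -> (forall v, flow (F :&: X) v = flow (G :&: X) v) ->
  eulerian F = eulerian G.
Proof.
move=> eqD eqI; apply/eulerianP/eulerianP => e0 v; have := e0 v;
  by rewrite (flow_setID F X) (flow_setID G X) eqD eqI.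
Qed.

Lemma flow_shortcut (x y z v : T) :
  x != y -> flow [set (x, y); (y, z)] v = flow [set (x, z)] v.
Proof.
move=> xy; rewrite /flow big_setU1 ?big_set1 /= ?addrA ?subrK //.
by rewrite inE xpair_eqE (negbTE xy).
Qed.

End ArcFlow.

Section SymmetricDifference.

Variable T : finType.
Implicit Types F X : {set T}.

Definition symdiff F X := (F :\: X) :|: (X :\: F).

Lemma symdiffK X : involutive (symdiff^~ X).
Proof. by move=> F; apply/setP => x; rewrite !inE; case: (x \in F); case: (x \in X). Qed.

Lemma symdiffD F X : symdiff F X :\: X = F :\: X.
Proof. by apply/setP => x; rewrite !inE; case: (x \in F); case: (x \in X). Qed.

Lemma symdiffI F X : symdiff F X :&: X = X :\: F.
Proof. by apply/setP => x; rewrite !inE; case: (x \in F); case: (x \in X). Qed.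

Lemma card_symdiff F X : (#|symdiff F X| + 2 * #|F :&: X| = #|F| + #|X|)%N.
Proof.
have disj : (F :\: X) :&: (X :\: F) = set0.
  by apply/setP => x; rewrite !inE; case: (x \in F); case: (x \in X).
have := cardsUI (F :\: X) (X :\: F); rewrite disj cards0 -/(symdiff F X).
have := cardsID X F; have := cardsID F X; rewrite [X :&: F]setIC; lia.
Qed.

Lemma sign_symdiff (R : pzRingType) F X :
  odd #|X| -> (-1) ^+ #|symdiff F X| = - (-1) ^+ #|F| :> R.
Proof.
move=> oddX; rewrite -signr_odd -[in RHS]signr_odd -signrN; congr (_ ^+ _).
have := congr1 odd (card_symdiff F X).
by rewrite oddD oddM /= addbF oddD oddX addbT => ->.
Qed.

End SymmetricDifference.

Section OrientedGraph.

Variables (V : finType) (e d : rel V).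
Hypotheses (He : simple_graph e) (Hd : orientation e d).
Implicit Types F : {set V * V}.

Lemma mem_arcs_onT x : (x \in arcs_on d [set: V]) = d x.1 x.2.
Proof. by rewrite !inE. Qed.

Lemma arc_neq x y : d x y -> x != y.
Proof. by move=> /Hd.1 exy; apply: contraTneq exy => ->; exact: He.1. Qed.

Lemma arc_antisym x y : d x y -> d y x = false.
Proof. by move=> dxy; have := Hd.2 x y (Hd.1 x y dxy); rewrite dxy; case: (d y x). Qed.

Lemma arc_out_nbhd x y : d x y -> y \in nbhd e x.
Proof. by move=> /Hd.1 exy; rewrite inE. Qed.

Lemma arc_in_nbhd x y : d x y -> x \in nbhd e y.
Proof. by move=> /Hd.1 exy; rewrite inE He.2. Qed.

Section Reduction.

Variables u1 u2 u3 u4 : V.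
Hypotheses (deg_u1 : deg e u1 = 2%N) (nbhd_u2 : nbhd e u2 = [set u1; u3; u4]).
Hypotheses (d13 : d u1 u3) (d21 : d u2 u1) (d23 : d u2 u3) (d42 : d u4 u2).

Local Notation A := (arcs_on d [set: V]).
Local Notation A' := (arcs_on d ([set: V] :\ u1 :\ u2)).
Local Notation a13 := (u1, u3).
Local Notation a21 := (u2, u1).
Local Notation a23 := (u2, u3).
Local Notation a42 := (u4, u2).
Local Notation triangle := (a23 |: [set a21; a13]).

Lemma nbhd_u1 : nbhd e u1 = [set u2; u3].
Proof.
apply: set2_card2 => //; first exact: arc_in_nbhd d21.
  exact: arc_out_nbhd d13.
exact: arc_neq d23.
Qed.

Lemma out_u1 x : x \in A -> (x.1 == u1) = (x == a13).
Proof.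
case: x => p q; rewrite mem_arcs_onT /= => dpq; apply/eqP/eqP => [p1|[-> _] //].
move: dpq; rewrite p1 => dpq; have := arc_out_nbhd dpq.
rewrite nbhd_u1 !inE => /orP[]/eqP q_eq; rewrite q_eq // in dpq *.
by rewrite (arc_antisym d21) in dpq.
Qed.

Lemma in_u1 x : x \in A -> (x.2 == u1) = (x == a21).
Proof.
case: x => p q; rewrite mem_arcs_onT /= => dpq; apply/eqP/eqP => [q1|[_ ->]//].
move: dpq; rewrite q1 => dpq; have := arc_in_nbhd dpq.
rewrite nbhd_u1 !inE => /orP[]/eqP p_eq; rewrite p_eq // in dpq *.
by rewrite (arc_antisym d13) in dpq.
Qed.

Lemma out_u2 x : x \in A -> (x.1 == u2) = (x == a21) || (x == a23).
Proof.
case: x => p q; rewrite mem_arcs_onT /= !xpair_eqE => dpq.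
case: (eqVneq p u2) => [p2|] //=; move: dpq; rewrite p2 => dpq.
have := arc_out_nbhd dpq; rewrite nbhd_u2 !inE => /orP[/orP[]|] // /eqP q4.
by rewrite q4 arc_antisym in dpq.
Qed.

Lemma in_u2 x : x \in A -> (x.2 == u2) = (x == a42).
Proof.
case: x => p q; rewrite mem_arcs_onT /= => dpq; apply/eqP/eqP => [q2|[_ ->]//].
move: dpq; rewrite q2 => dpq; have := arc_in_nbhd dpq.
rewrite nbhd_u2 !inE => /orP[/orP[]|] /eqP p_eq; rewrite p_eq // in dpq *.
  by rewrite (arc_antisym d21) in dpq.
by rewrite (arc_antisym d23) in dpq.
Qed.

Lemma a21_neq_a23 : a21 != a23.
Proof. by rewrite xpair_eqE eqxx (negbTE (arc_neq d13)). Qed.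

Lemma flow_u1 F : F \subset A -> flow F u1 = (a13 \in F)%:R - (a21 \in F)%:R.
Proof.
move=> /subsetP FA; rewrite /flow sumrB -!sum_eq_indicator.
by congr (_ - _); apply: eq_bigr => x /FA xA; rewrite ?(out_u1 xA) ?(in_u1 xA).
Qed.

Lemma flow_u2 F :
  F \subset A -> flow F u2 = (a21 \in F)%:R + (a23 \in F)%:R - (a42 \in F)%:R.
Proof.
move=> /subsetP FA; rewrite /flow sumrB -!sum_eq_indicator -big_split /=.
congr (_ - _); apply: eq_bigr => x /FA xA; last by rewrite (in_u2 xA).
rewrite (out_u2 xA); case: (eqVneq x a21) => [->|_]; last by rewrite add0r.
by rewrite (negbTE a21_neq_a23) addr0.
Qed.

Lemma eulerian_balance_u1_u2 F : F \subset A -> eulerian F ->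
  (a13 \in F) = (a21 \in F) /\ ((a21 \in F) + (a23 \in F) = (a42 \in F))%N.
Proof.
move=> FA /eulerianP eF; have := eF u1; have := eF u2.
rewrite flow_u1 // flow_u2 // -natrD => /eqP; rewrite subr_eq0 eqr_nat => /eqP e2.
move/eqP; rewrite subr_eq0 eqr_nat => e1; split => //.
by move: e1; case: (a13 \in F); case: (a21 \in F).
Qed.

Lemma mem_arcs_on_deleted x :
  (x \in A') = (x \in A) && [&& x != a21, x != a23, x != a42 & x != a13].
Proof.
have xA : (x \in A) = d x.1 x.2 by exact: mem_arcs_onT.
rewrite xA inE !inE andbT; case: (boolP (d x.1 x.2)) => dx; rewrite ?andbF //.
rewrite -xA in dx; rewrite (out_u1 dx) (in_u1 dx) (out_u2 dx) (in_u2 dx).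
by case: (x == a21); case: (x == a23); case: (x == a42); case: (x == a13).
Qed.

Lemma eulerian_avoiding_a42 F :
  (F \subset A) && eulerian F && (a42 \notin F) = (F \subset A') && eulerian F.
Proof.
apply/idP/idP => [/andP[/andP[FA eF] a42F]|/andP[FA' ->]].
  have [a13F a42E] := eulerian_balance_u1_u2 FA eF; rewrite (negbTE a42F) in a42E.
  have a21F : a21 \notin F by move: a42E; case: (a21 \in F).
  have a23F : a23 \notin F by move: a42E; case: (a23 \in F); case: (a21 \in F).
  rewrite eF andbT; apply/subsetP => x xF; rewrite mem_arcs_on_deleted (subsetP FA) //=.
  by apply/and4P; split; apply: contraTneq xF => ->; rewrite ?a13F.
have FA : F \subset A.
  by apply/subsetP => x /(subsetP FA'); rewrite mem_arcs_on_deleted => /andP[].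
rewrite FA /=; apply: contraTN FA' => a42F; apply/subsetPn; exists a42 => //.
by rewrite mem_arcs_on_deleted eqxx !andbF.
Qed.

Lemma triangle_subset : triangle \subset A.
Proof. by apply/subsetP => x /setU1P[->|/set2P[]->]; rewrite mem_arcs_onT. Qed.

Lemma a42_notin_triangle : a42 \notin triangle.
Proof.
rewrite !inE !xpair_eqE (negbTE (arc_neq d42)).
by rewrite [u2 == u3](negbTE (arc_neq d23)) !andbF.
Qed.

Lemma odd_card_triangle : odd #|triangle|.
Proof.
rewrite cardsU1 cards2 !inE !xpair_eqE eqxx eq_sym (negbTE (arc_neq d13)).
by rewrite [u2 == u1](negbTE (arc_neq d21)).
Qed.

Lemma eulerian_toggle_triangle F : F \subset A -> eulerian F -> a42 \in F ->
  eulerian (symdiff F triangle).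
Proof.
move=> FA eF a42F; have [a13F a42E] := eulerian_balance_u1_u2 FA eF.
rewrite a42F in a42E.
have a21F : a21 \in F = ~~ (a23 \in F).
  by move: a42E; case: (a21 \in F); case: (a23 \in F).
have meetF : F :&: triangle = if a23 \in F then [set a23] else [set a21; a13].
  apply: setI_blocks => x; rewrite !inE; first by move=> /eqP->.
  by move=> /orP[]/eqP->; rewrite ?a13F a21F.
have meetT : symdiff F triangle :&: triangle =
             if a23 \in F then [set a21; a13] else [set a23].
  rewrite symdiffI setDE setIC -if_neg; apply: setI_blocks => x; rewrite !inE.
    by move=> /eqP->.
  by move=> /orP[]/eqP->; rewrite ?a13F a21F negbK.
rewrite (eulerian_exchange (G := F) (X := triangle)) ?symdiffD // => v.
have shortcut := flow_shortcut u3 v (arc_neq d21).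
by rewrite meetF meetT; case: (a23 \in F).
Qed.

Lemma sum_through_a42 :
  \sum_(F : {set V * V} | (F \subset A) && eulerian F && (a42 \in F))
    ((-1) ^+ #|F| : int) = 0.
Proof.
apply: (sum_sign_reversing_involution (f := fun F => symdiff F triangle)).
- exact: symdiffK.
- move=> F /andP[/andP[FA eF] a42F]; rewrite eulerian_toggle_triangle //.
  rewrite andbT /symdiff in_setU in_setD a42_notin_triangle a42F subUset.
  by rewrite !(subset_trans (subsetDl _ _)) ?triangle_subset.
- by move=> F _; exact: sign_symdiff odd_card_triangle.
Qed.

Theorem diff_on_reduction : diff_on d [set: V] = diff_on d ([set: V] :\ u1 :\ u2).
Proof.
rewrite /diff_on (bigID (fun F : {set V * V} => a42 \in F)) /= sum_through_a42 add0r.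
by apply: eq_bigl => F; exact: eulerian_avoiding_a42.
Qed.

End Reduction.

End OrientedGraph.

Theorem mainTheorem7 (V : finType) (e d : rel V) (u1 u2 u3 u4 : V) :
  simple_graph e ->
  e u1 u2 -> e u2 u3 -> e u1 u3 ->
  deg e u1 = 2%N -> deg e u2 = 3%N ->
  nbhd e u2 = [set u1; u3; u4] ->
  orientation e d ->
  d u1 u3 -> d u2 u1 -> d u2 u3 -> d u4 u2 ->
  diff_on d [set: V] = diff_on d ([set: V] :\ u1 :\ u2) /\
  (AT_on d [set: V] <-> AT_on d ([set: V] :\ u1 :\ u2)).
Proof.
(* The three edges of the triangle and d(u2) = 3 follow from the other hypotheses. *)
move=> He _ _ _ deg_u1 _ nbhd_u2 Hd d13 d21 d23 d42.
have diffE := diff_on_reduction He Hd deg_u1 nbhd_u2 d13 d21 d23 d42.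
by split=> //; rewrite /AT_on diffE.
Qed.
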